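(* Let $n\ge 1$, $c\ge 2$, $d\ge 2$ be integers, and let $f:\mathbb{Z}_c^n\to\mathbb{Z}_d$ be a function that is not an $n$-partite linear function. Let $\pi$ be a probability distribution on $\mathbb{Z}_c^n$ with $\pi(\mathbf{s})>0$ for every $\mathbf{s}$, and put $$\bar p^{\mathcal{L}}_{f}=\max_{g}\sum_{\mathbf{s}}\pi(\mathbf{s})\,\delta^{f(\mathbf{s})}_{g(\mathbf{s})},$$ the maximum being over all $n$-partite linear functions $g:\mathbb{Z}_c^n\to\mathbb{Z}_d$. Consider the inequality $$\sum_{\mathbf{s}}\pi(\mathbf{s})\sum_{k=1}^{d-1}\Big(\delta^{k}_{f(\mathbf{s})}-\delta^{0}_{f(\mathbf{s})}\Big)p(k|\mathbf{s})\;\le\;\bar p^{\mathcal{L}}_{f}-\sum_{\mathbf{s}}\pi(\mathbf{s})\,\delta^{0}_{f(\mathbf{s})}. \qquad (\ast)$$ Then $(\ast)$ is a non-trivial Bell inequality: it is satisfied by every LHV correlator, and its right-hand side is strictly smaller than the maximum of its left-hand side over all correlators in $\mathcal{P}$.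
   Context: Bell scenario $(n,c,d)$: $n$ space-like separated parties; party $j$ receives an input $s_j\in\mathbb{Z}_c$ and produces an output $m_j\in\mathbb{Z}_d$; $\mathbf{s}=(s_1,\dots,s_n)$, $\mathbf{m}=(m_1,\dots,m_n)$. A conditional distribution $p(\mathbf{m}|\mathbf{s})$ is LHV (local hidden variable) if $p(\mathbf{m}|\mathbf{s})=\int p(\lambda)d\lambda\prod_{j=1}^n p(m_j|s_j,\lambda)$ for some probability measure on a hidden variable space and local conditional distributions. Its correlator is $p(k|\mathbf{s})=\sum_{\mathbf{m}}\delta^{[\sum_j m_j]_d}_{k}\,p(\mathbf{m}|\mathbf{s})$ for $k\in\mathbb{Z}_d$, where $[\cdot]_d$ denotes reduction mod $d$; LHV correlators are correlators of LHV distributions. $\mathcal{P}$ is the set of all correlator families, i.e. the convex hull of the deterministic correlators $p(k|\mathbf{s})=\delta^k_{F(\mathbf{s})}$ over all functions $F:\mathbb{Z}_c^n\to\mathbb{Z}_d$ (equivalently, all families with $p(\cdot|\mathbf{s})$ a probability distribution on $\mathbb{Z}_d$ for each $\mathbf{s}$). A function $g:\mathbb{Z}_c^n\to\mathbb{Z}_d$ is $n$-partite linear if $g(\mathbf{s})=[\sum_{j=1}^n g_j(s_j)]_d$ for some single-site maps $g_j:\mathbb{Z}_c\to\mathbb{Z}_d$. $\delta$ denotes the Kronecker delta. *)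

From HB Require Import structures.
From mathcomp Require Import all_boot all_order all_algebra.
From mathcomp Require Import all_classical all_reals all_analysis.
Set Implicit Arguments. Unset Strict Implicit. Unset Printing Implicit Defensive.
Import Order.TTheory GRing.Theory Num.Theory.
Local Open Scope ring_scope.

(* Bell scenario (n,c,d): settings s : Z_c^n are {ffun 'I_n -> 'I_c},
   outcomes m : Z_d^n are {ffun 'I_n -> 'I_d}; Z_k is 'I_k with values in nat
   and arithmetic taken mod k. *)
Definition setting (n c : nat) := {ffun 'I_n -> 'I_c}.
Definition outcome (n d : nat) := {ffun 'I_n -> 'I_d}.

Definition nlinear (n c d : nat) (g : setting n c -> 'I_d) : bool :=
  [exists G : {ffun 'I_n -> {ffun 'I_c -> 'I_d}},
     [forall s : setting n c, nat_of_ord (g s) == ((\sum_(j < n) nat_of_ord (G j (s j))) %% d)%N]].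

Definition correlator (R : pzRingType) (n c d : nat)
  (p : setting n c -> outcome n d -> R) (s : setting n c) (k : 'I_d) : R :=
  \sum_(m : outcome n d | ((\sum_(j < n) nat_of_ord (m j)) %% d == k)%N) p s m.

Definition LHV_dist (R : realType) (n c d : nat)
  (p : setting n c -> outcome n d -> R) : Prop :=
  exists (disp : measure_display) (L : measurableType disp)
         (P : probability L R) (q : 'I_n -> 'I_c -> L -> 'I_d -> R),
    [/\ (forall j a l b, 0 <= q j a l b),
        (forall j a l, \sum_(b < d) q j a l b = 1),
        (forall j a b, measurable_fun setT (fun l => q j a l b)) &
        (forall s m, ((p s m)%:E = \int[P]_l (\prod_(j < n) q j (s j) l (m j))%:E)%E)].

Definition LHV_correlator (R : realType) (n c d : nat)
  (pc : setting n c -> 'I_d -> R) : Prop :=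
  exists p : setting n c -> outcome n d -> R,
    LHV_dist p /\ forall s k, pc s k = correlator p s k.

Definition in_P (R : realType) (n c d : nat) (pc : setting n c -> 'I_d -> R) : Prop :=
  forall s, (forall k, 0 <= pc s k) /\ \sum_(k < d) pc s k = 1.

Definition kdelta (R : pzRingType) (d : nat) (a b : 'I_d) : R := (a == b)%:R.

Definition success (R : realType) (n c d : nat) (pi : setting n c -> R)
  (f g : setting n c -> 'I_d) : R :=
  \sum_(s : setting n c) pi s * kdelta R (f s) (g s).

Definition pbarL (R : realType) (n c d : nat) (pi : setting n c -> R)
  (f : setting n c -> 'I_d) : R :=
  \big[Num.max/0]_(g : {ffun setting n c -> 'I_d} | nlinear g) success pi f g.

Definition bell_lhs (R : realType) (n c d : nat) (pi : setting n c -> R)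
  (f : setting n c -> 'I_d) (pc : setting n c -> 'I_d -> R) : R :=
  \sum_(s : setting n c) pi s *
    \sum_(k < d | nat_of_ord k != 0%N)
       ((k == f s)%:R - (nat_of_ord (f s) == 0%N)%:R) * pc s k.

Definition bell_rhs (R : realType) (n c d : nat) (pi : setting n c -> R)
  (f : setting n c -> 'I_d) : R :=
  pbarL pi f - \sum_(s : setting n c) pi s * (nat_of_ord (f s) == 0%N)%:R.

From HB Require Import structures.
From mathcomp Require Import all_boot all_order all_algebra.
From mathcomp Require Import all_classical all_reals all_analysis.
From mathcomp Require Import measurable_realfun.
Import Order.TTheory GRing.Theory Num.Theory.
Local Open Scope ring_scope.
Set Implicit Arguments. Unset Strict Implicit.

(* For a correlator family, each term of the left-hand side collapses to
   p(f(s)|s) - delta^0_{f(s)}, so the inequality says that the success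
   probability sum_s pi(s) p(f(s)|s) is at most pbarL.  For fixed hidden
   variable l the local responses q_j(.|s_j,l) form a convex combination of
   deterministic local strategies h : (j, a) |-> b, and the strategy h yields
   the n-partite linear function s |-> [sum_j h(j, s_j)]_d; hence the success
   probability is at most pbarL for every l, and so after integrating over l.
   Conversely the deterministic correlator delta_{f(s)} has success
   probability 1, while each linear g misses f at some s with pi(s) > 0. *)

Lemma sum_delta_mull (R : pzSemiRingType) (I : finType) (x : I -> R) (a : I) :
  \sum_i (i == a)%:R * x i = x a.
Proof.
by rewrite (bigD1 a) //= eqxx mul1r big1 ?addr0 // => i /negbTE ->; rewrite mul0r.
Qed.

Lemma sum_bell_weights (R : pzRingType) (d : nat) (x : 'I_d -> R) (a : 'I_d) :
  \sum_k x k = 1 ->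
  \sum_(k < d | nat_of_ord k != 0%N) ((k == a)%:R - (nat_of_ord a == 0%N)%:R) * x k
  = x a - (nat_of_ord a == 0%N)%:R.
Proof.
move=> x_sum1; under eq_bigr do rewrite mulrBl.
rewrite sumrB -mulr_sumr.
have [a0 | a_neq0] := eqVneq (nat_of_ord a) 0%N; last first.
  rewrite (bigD1 a) //= eqxx mul1r big1 ?addr0 ?mul0r //.
  by move=> k /andP [_ /negbTE ->]; rewrite mul0r.
rewrite big1 => [|k k_neq0]; last first.
  by rewrite (_ : k == a = false) ?mul0r //; apply: contraNF k_neq0 => /eqP ->; rewrite a0.
have -> : \sum_(k < d | nat_of_ord k != 0%N) x k = 1 - x a.
  rewrite -x_sum1 [in RHS](bigD1 a) //= [RHS]addrC addKr; apply: eq_bigl => k.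
  by rewrite -val_eqE /= a0.
by rewrite mul1r sub0r opprB.
Qed.

Lemma bell_lhs_normalized (R : realType) (n c d : nat) (pi : setting n c -> R)
    (f : setting n c -> 'I_d) (pc : setting n c -> 'I_d -> R) :
  (forall s, \sum_k pc s k = 1) ->
  bell_lhs pi f pc = \sum_s pi s * pc s (f s)
                     - \sum_s pi s * (nat_of_ord (f s) == 0%N)%:R.
Proof.
move=> pc_sum1; rewrite /bell_lhs -sumrB; apply: eq_bigr => s _.
by rewrite sum_bell_weights // mulrBr.
Qed.

Lemma big_pair_curry (R : Type) (idx : R) (op : Monoid.com_law idx)
    (I J : finType) (F : I * J -> R) :
  \big[op/idx]_p F p = \big[op/idx]_i \big[op/idx]_j F (i, j).
Proof. by rewrite pair_bigA; apply: eq_bigr => -[]. Qed.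

Section NonnegativeCombinationOfExpectations.
Variables (R : realType) (disp : measure_display) (L : measurableType disp).
Variables (P : probability L R) (I : finType) (w p : I -> R) (phi : I -> L -> R).
Hypotheses (w_ge0 : forall i, 0 <= w i) (phi_ge0 : forall i l, 0 <= phi i l).
Hypothesis phi_meas : forall i, measurable_fun setT (phi i).
Hypothesis p_expectation : forall i, (p i)%:E = (\int[P]_l (phi i l)%:E)%E.

Lemma sum_expectation :
  ((\sum_i w i * p i)%:E = \int[P]_l (\sum_i w i * phi i l)%:E)%E.
Proof.
rewrite -sumEFin; under eq_integral do rewrite -sumEFin.
rewrite ge0_integral_sum //; last 2 first.
- by move=> i; apply/measurable_EFinP/measurable_funM => //; exact: measurable_cst.
- by move=> i l _; rewrite lee_fin mulr_ge0.
apply: eq_bigr => i _; under eq_integral do rewrite EFinM.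
rewrite ge0_integralZl_EFin // -?p_expectation ?EFinM //.
- by move=> l _; rewrite lee_fin.
- exact/measurable_EFinP.
Qed.

Lemma expectation_cst (K : R) : (\int[P]_l K%:E = K%:E)%E.
Proof.
rewrite integral_cst //; set mass := (X in (_ * X)%E).
by rewrite (_ : mass = 1%E) ?mule1 //; exact: probability_setT.
Qed.

Lemma sum_expectation_le (K : R) :
  (forall l, \sum_i w i * phi i l <= K) -> \sum_i w i * p i <= K.
Proof.
move=> le_K; rewrite -lee_fin sum_expectation -(expectation_cst K).
apply: ge0_le_integral => //.
- by move=> l _; rewrite lee_fin sumr_ge0 // => i _; rewrite mulr_ge0.
- apply/measurable_EFinP/measurable_sum => i.
  by apply: measurable_funM => //; exact: measurable_cst.
- by move=> l _; rewrite lee_fin.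
Qed.

Lemma sum_expectation_eq (K : R) :
  (forall l, \sum_i w i * phi i l = K) -> \sum_i w i * p i = K.
Proof.
move=> eq_K; apply/eqP; rewrite -eqe sum_expectation.
by under eq_integral do rewrite eq_K; rewrite expectation_cst.
Qed.

End NonnegativeCombinationOfExpectations.

Section LocalStrategies.
Variables (n c d : nat) (d_gt0 : (0 < d)%N).

Definition outcome_sum (m : outcome n d) : 'I_d :=
  Ordinal (ltn_pmod (\sum_(j < n) nat_of_ord (m j)) d_gt0).

Definition strategy := {ffun 'I_n * 'I_c -> 'I_d}.

Definition strategy_outcome (s : setting n c) (h : strategy) : outcome n d :=
  [ffun j => h (j, s j)].

Definition strategy_function (h : strategy) : {ffun setting n c -> 'I_d} :=
  [ffun s => outcome_sum (strategy_outcome s h)].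

Lemma strategy_function_nlinear (h : strategy) : nlinear (strategy_function h).
Proof.
apply/existsP; exists [ffun j => [ffun a => h (j, a)]]; apply/forallP => s.
rewrite ffunE /=; apply/eqP; congr (_ %% _)%N.
by apply: eq_bigr => j _; rewrite !ffunE.
Qed.

Variables (R : comPzRingType) (Q : 'I_n -> 'I_c -> 'I_d -> R).
Hypothesis Q_sum1 : forall j a, \sum_b Q j a b = 1.

(* the probability of the strategy h when every party j answers input a
   independently according to Q j a *)
Definition strategy_weight (h : strategy) : R :=
  \prod_(ja : 'I_n * 'I_c) Q ja.1 ja.2 (h ja).

Lemma sum_strategy_weight : \sum_h strategy_weight h = 1.
Proof.
rewrite /strategy_weight -(bigA_distr_bigA (fun ja b => Q ja.1 ja.2 b)).
by rewrite big1 // => ja _.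
Qed.

Lemma prod_local_response (s : setting n c) (m : outcome n d) :
  \prod_j Q j (s j) (m j) =
  \sum_h (m == strategy_outcome s h)%:R * strategy_weight h.
Proof.
pose delta_s (ja : 'I_n * 'I_c) b : R :=
  if ja.2 == s ja.1 then (b == m ja.1)%:R else 1.
transitivity (\prod_(ja : 'I_n * 'I_c) \sum_b delta_s ja b * Q ja.1 ja.2 b).
  rewrite big_pair_curry; apply: eq_bigr => j _ /=.
  rewrite (bigD1 (s j)) //= [X in _ * X]big1 => [|a /negbTE a_neq].
    by rewrite mulr1 /delta_s /= eqxx sum_delta_mull.
  by rewrite /delta_s /= a_neq; under eq_bigr do rewrite mul1r.
rewrite bigA_distr_bigA; apply: eq_bigr => h _; rewrite big_split /=; congr (_ * _).
rewrite big_pair_curry /=.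
transitivity (\prod_j ((h (j, s j) == m j)%:R : R)).
  apply: eq_bigr => j _; rewrite (bigD1 (s j)) //= big1 ?mulr1 /delta_s /= ?eqxx //.
  by move=> a /negbTE ->.
have [->|m_neq] := eqVneq m (strategy_outcome s h).
  by rewrite big1 // => j _; rewrite ffunE eqxx.
have [j hj] : exists j, h (j, s j) != m j.
  apply/existsP; apply: contraR m_neq => /existsPn h_eq.
  by apply/eqP/ffunP => j; rewrite ffunE; apply/esym/eqP/negPn.
by rewrite (bigD1 j) //= (negbTE hj) mul0r.
Qed.

End LocalStrategies.

Lemma success_le_pbarL (R : realType) (n c d : nat) (pi : setting n c -> R)
    (f : setting n c -> 'I_d) (g : {ffun setting n c -> 'I_d}) :
  nlinear g -> success pi f g <= pbarL pi f.
Proof. by move=> g_lin; exact: le_bigmax_cond. Qed.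

Lemma local_success_le_pbarL (R : realType) (n c d : nat) (d_gt0 : (0 < d)%N)
    (Q : 'I_n -> 'I_c -> 'I_d -> R) (pi : setting n c -> R)
    (f : setting n c -> 'I_d) :
  (forall j a b, 0 <= Q j a b) -> (forall j a, \sum_b Q j a b = 1) ->
  (forall s, 0 <= pi s) ->
  \sum_(sm : setting n c * outcome n d)
     (pi sm.1 * (outcome_sum d_gt0 sm.2 == f sm.1)%:R) * \prod_j Q j (sm.1 j) (sm.2 j)
  <= pbarL pi f.
Proof.
move=> Q_ge0 Q_sum1 pi_ge0.
under eq_bigr do rewrite (prod_local_response Q_sum1) mulr_sumr.
rewrite exchange_big /=.
have strategy_term h : \sum_(sm : setting n c * outcome n d)
     (pi sm.1 * (outcome_sum d_gt0 sm.2 == f sm.1)%:R)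
       * ((sm.2 == strategy_outcome sm.1 h)%:R * strategy_weight Q h)
   = strategy_weight Q h * success pi f (strategy_function d_gt0 h).
  rewrite big_pair_curry /success mulr_sumr; apply: eq_bigr => s _ /=.
  rewrite (bigD1 (strategy_outcome s h)) //= eqxx big1 => [|m /negbTE ->]; last first.
    by rewrite mul0r mulr0.
  by rewrite addr0 mul1r /kdelta ffunE eq_sym mulrC.
rewrite (eq_bigr _ (fun h _ => strategy_term h)).
rewrite -[pbarL pi f]mul1r -(sum_strategy_weight Q_sum1) mulr_suml.
apply: ler_sum => h _; rewrite ler_wpM2l ?success_le_pbarL ?strategy_function_nlinear //.
exact: prodr_ge0.
Qed.

Section LHVCorrelators.
Variables (R : realType) (n c d : nat) (d_gt0 : (0 < d)%N).
Variable p : setting n c -> outcome n d -> R.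
Hypothesis p_LHV : LHV_dist p.

Lemma sum_correlator s : \sum_k correlator p s k = \sum_m p s m.
Proof.
rewrite /correlator; under eq_bigr do rewrite big_mkcond.
rewrite exchange_big; apply: eq_bigr => m _ /=.
rewrite (bigD1 (outcome_sum d_gt0 m)) //= eqxx big1 ?addr0 // => k k_neq.
by rewrite ifF //; apply: contraNF k_neq => /eqP k_eq; apply/eqP/val_inj.
Qed.

Lemma LHV_dist_sum1 s : \sum_m p s m = 1.
Proof.
have [disp [L [P [q [q_ge0 q_sum1 q_meas p_eq]]]]] := p_LHV.
under eq_bigr do rewrite -[p s _]mul1r.
apply: (sum_expectation_eq (P := P) (w := fun=> 1) (p := p s)
  (phi := fun m l => \prod_j q j (s j) l (m j))).
- by move=> _; exact: ler01.
- by move=> m l; exact: prodr_ge0.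
- by move=> m; apply: measurable_prod => j _; exact: q_meas.
- by move=> m; exact: p_eq.
- move=> l; under eq_bigr do rewrite mul1r.
  rewrite -(bigA_distr_bigA (fun j b => q j (s j) l b)).
  by rewrite big1 // => j _; exact: q_sum1.
Qed.

Lemma LHV_success_le_pbarL (pi : setting n c -> R) (f : setting n c -> 'I_d) :
  (forall s, 0 <= pi s) -> \sum_s pi s * correlator p s (f s) <= pbarL pi f.
Proof.
move=> pi_ge0; have [disp [L [P [q [q_ge0 q_sum1 q_meas p_eq]]]]] := p_LHV.
have -> : \sum_s pi s * correlator p s (f s) =
    \sum_(sm : setting n c * outcome n d)
      (pi sm.1 * (outcome_sum d_gt0 sm.2 == f sm.1)%:R) * p sm.1 sm.2.
  rewrite big_pair_curry; apply: eq_bigr => s _ /=.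
  rewrite mulr_sumr big_mkcond; apply: eq_bigr => m _ /=.
  by rewrite -val_eqE /=; case: eqP; rewrite ?mulr1 ?mulr0 ?mul0r.
apply: (sum_expectation_le (P := P) (p := fun sm => p sm.1 sm.2)
  (w := fun sm => pi sm.1 * (outcome_sum d_gt0 sm.2 == f sm.1)%:R)
  (phi := fun sm l => \prod_j q j (sm.1 j) l (sm.2 j))).
- by move=> sm; rewrite mulr_ge0.
- by move=> sm l; exact: prodr_ge0.
- by move=> sm; apply: measurable_prod => j _; exact: q_meas.
- by move=> sm; exact: p_eq.
- by move=> l; apply: (local_success_le_pbarL _ (Q := fun j a b => q j a l b)).
Qed.

End LHVCorrelators.

Lemma pbarL_lt1 (R : realType) (n c d : nat) (pi : setting n c -> R)
    (f : {ffun setting n c -> 'I_d}) :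
  ~~ nlinear f -> (forall s, 0 < pi s) -> \sum_s pi s = 1 -> pbarL pi f < 1.
Proof.
move=> f_nonlin pi_gt0 pi_sum1; apply: (big_ind (fun x => x < 1)) => //.
  by move=> x y x_lt1 y_lt1; rewrite gt_max x_lt1 y_lt1.
move=> g g_lin; have [s fs_neq] : exists s, f s != g s.
  apply/existsP; apply: contraR f_nonlin => /existsPn f_eq.
  by rewrite (_ : f = g) //; apply/ffunP => s; exact/eqP/negPn/f_eq.
rewrite /success -pi_sum1 (bigD1 s) //= [ltRHS](bigD1 s) //= /kdelta (negbTE fs_neq).
rewrite mulr0 add0r ltr_pwDl //; apply: ler_sum => t _.
by apply: ler_piMr; [exact: ltW | case: (_ == _)].
Qed.

Theorem proposition3p3p1 (R : realType) (n c d : nat)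
  (hn : (1 <= n)%N) (hc : (2 <= c)%N) (hd : (2 <= d)%N)
  (f : {ffun setting n c -> 'I_d}) (hf : ~~ nlinear f)
  (pi : setting n c -> R) (hpi_pos : forall s, 0 < pi s)
  (hpi_sum : \sum_(s : setting n c) pi s = 1) :
  (forall pc : setting n c -> 'I_d -> R,
      LHV_correlator pc -> bell_lhs pi f pc <= bell_rhs pi f)
  /\ (exists pc : setting n c -> 'I_d -> R,
      in_P pc /\ bell_rhs pi f < bell_lhs pi f pc).
Proof.
have d_gt0 : (0 < d)%N := ltnW hd.
have pi_ge0 s : 0 <= pi s by exact: ltW.
split=> [pc [p [p_LHV pc_eq]]|].
  have pc_sum1 s : \sum_k pc s k = 1.
    by under eq_bigr do rewrite pc_eq; rewrite sum_correlator // LHV_dist_sum1.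
  rewrite bell_lhs_normalized // /bell_rhs lerD2r.
  under eq_bigr do rewrite pc_eq.
  exact: LHV_success_le_pbarL.
exists (fun s k => kdelta R k (f s)).
have delta_sum1 s : \sum_k kdelta R k (f s) = 1.
  by rewrite -[RHS](sum_delta_mull (fun=> 1) (f s)); apply: eq_bigr => k _; rewrite mulr1.
split=> [s|]; first by split=> [k|]; [exact: ler0n | exact: delta_sum1].
rewrite bell_lhs_normalized // /bell_rhs ltrD2r.
under [ltRHS]eq_bigr do rewrite /kdelta eqxx mulr1.
by rewrite hpi_sum pbarL_lt1.
Qed.
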